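(* Let $n$ be a positive integer and $r$ an integer with $0\le r\le \lceil n/2\rceil$, and let $d_\star=d_\star(r,n)$ be an integer maximising $q_n^{r,d}$ over all integers $d$. Then either \[ d_\star = \left\lceil \frac{(n-2r)^2+2n-5r-1}{n-r+3}\right\rceil \quad\text{or}\quad d_\star = \frac{(n-2r)^2+2n-5r-1}{n-r+3}+1. \]
   Context: $Q(P_n)$ is the family of subsets of $[n]$ containing no two consecutive integers, and $Q^{(r)}(P_n)$ its members of size $r$. The out-degree $d^+(A)$ of $A\in Q(P_n)$ is the number of $b\in[n]\setminus A$ with $A\cup\{b\}\in Q(P_n)$. $q_n^{r,d}$ is the number of $A\in Q^{(r)}(P_n)$ with $d^+(A)=d$. *)

From mathcomp Require Import all_boot all_order all_algebra.
Set Implicit Arguments. Unset Strict Implicit. Unset Printing Implicit Defensive.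
Import Order.TTheory GRing.Theory Num.Theory.

(* [n] = {1,...,n} is represented by the elements of 'I_n.+1 other than 0. *)
Definition ground (n : nat) : {set 'I_n.+1} := [set i : 'I_n.+1 | 0 < (i : nat)].

Definition inQ (n : nat) (A : {set 'I_n.+1}) : bool :=
  (A \subset ground n) &&
  [forall i in A, forall j in A, (i : nat).+1 != (j : nat)].

Definition outdeg (n : nat) (A : {set 'I_n.+1}) : nat :=
  #|[set b in ground n :\: A | inQ (b |: A)]|.

Definition qnrd (n r : nat) (d : int) : nat :=
  #|[set A : {set 'I_n.+1} | [&& inQ A, #|A| == r & Posz (outdeg A) == d]]|.

(* A set A of [n] is encoded by its indicator word s of length n: A lies in Q(P_n)
   iff s has no two adjacent ones, and d^+(A) counts the zeros of s whose neighbours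
   are zeros too (with zeros padded at both ends).  Reading s letter by letter, with
   the last two letters as state, gives recurrences solved by
     q_n^{r,d} = C(r+1, n+1-2r-d) C(n-2r, d).
   If 2r = n + 1 only d = 0 occurs.  Otherwise, for N = n - 2r, the ratio
   q_n^{r,e+1} / q_n^{r,e} = (N-e+1)(N-e) / ((e+1)(r+1-N+e)) is at least 1 exactly
   when e Y <= X; hence a maximiser d satisfies (d-1) Y <= X <= d Y, i.e. d = ceil(X/Y), or d = X/Y + 1 when
   Y divides X. *)

From mathcomp Require Import all_boot all_order all_algebra.
From mathcomp Require Import zify ring.
Set Implicit Arguments. Unset Strict Implicit. Unset Printing Implicit Defensive.
Import Order.TTheory GRing.Theory Num.Theory.

Fixpoint bitseqs n : seq bitseq :=
  if n is m.+1 then [seq false :: s | s <- bitseqs m] ++ [seq true :: s | s <- bitseqs m]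
  else [:: [::]].

Lemma cons_inj T (x : T) : injective (cons x).
Proof. by apply: (@can_inj _ _ _ behead). Qed.

Lemma mem_bitseqs n s : (s \in bitseqs n) = (size s == n).
Proof.
elim: n s => [|n IH] [|b s] //=; rewrite mem_cat.
  by apply/negbTE/norP; split; apply/mapP => -[].
rewrite eqSS -IH.
apply/orP/idP => [[] /mapP [t t_in [_ ->]] // | s_in].
by case: b; [right | left]; apply/map_f.
Qed.

Lemma uniq_bitseqs n : uniq (bitseqs n).
Proof.
elim: n => //= n IH.
rewrite cat_uniq (map_inj_uniq (@cons_inj _ false)) (map_inj_uniq (@cons_inj _ true)) IH /=.
by rewrite andbT; apply/hasPn => _ /mapP [t _ ->]; apply/mapP => -[].
Qed.

Definition nand (a b : bool) := ~~ (a && b).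

(* [a] and [b] are the two letters preceding [s], and [s] is followed by [false].
   For [(a, b) = (true, false)] the phantom position 0 is never counted. *)
Fixpoint nfree (a b : bool) (s : bitseq) : nat :=
  if s is x :: t then ~~ [|| a, b | x] + nfree b x t else ~~ (a || b).

Definition nsparse a b n r d :=
  count (fun s => [&& path nand b s, count id s == r & nfree a b s == d]) (bitseqs n).

Lemma nsparse0 a b r d : nsparse a b 0 r d = (r == 0) && (~~ (a || b) == d :> nat).
Proof. by rewrite /nsparse /= addn0 eq_sym. Qed.

Lemma nsparseS a b n r d : nsparse a b n.+1 r d =
    count (fun s => [&& path nand false s, count id s == r
                      & ~~ (a || b) + nfree b false s == d]) (bitseqs n)
  + count (fun s => [&& ~~ b, path nand true s, (count id s).+1 == r
                      & nfree b true s == d]) (bitseqs n).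
Proof.
rewrite /nsparse /= count_cat !count_map; congr (_ + _); apply: eq_count => s /=.
  by rewrite /nand andbF /= orbF.
by rewrite /nand !orbT /= add1n add0n andbT -!andbA.
Qed.

Lemma nsparse10S n r d : nsparse true false n.+1 r d =
  nsparse false false n r d + (if r is r'.+1 then nsparse false true n r' d else 0).
Proof.
rewrite nsparseS /=; congr (_ + _).
by case: r => [|r] //; rewrite (@eq_count _ _ pred0) ?count_pred0 // => s /=; rewrite andbF.
Qed.

Lemma nsparse00S n r d : nsparse false false n.+1 r d =
    (if d is d'.+1 then nsparse false false n r d' else 0)
  + (if r is r'.+1 then nsparse false true n r' d else 0).
Proof.
rewrite nsparseS /=; congr (_ + _); last first.
  by case: r => [|r] //; rewrite (@eq_count _ _ pred0) ?count_pred0 // => s /=; rewrite andbF.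
case: d => [|d]; last by apply: eq_count => s; rewrite add1n eqSS.
by rewrite (@eq_count _ _ pred0) ?count_pred0 // => s; rewrite add1n /= !andbF.
Qed.

Lemma nsparse01S n r d : nsparse false true n.+1 r d = nsparse true false n r d.
Proof. by rewrite nsparseS /= count_pred0 addn0. Qed.

Definition closed10 n r d :=
  if 2 * r <= n.+1 then 'C(r.+1, n.+1 - 2 * r - d) * 'C(n - 2 * r, d) else 0.
Definition closed00 n r d :=
  if 2 * r <= n.+1 then 'C(r, n.+1 - 2 * r - d) * 'C(n.+1 - 2 * r, d) else 0.
Definition closed01 n r d :=
  if 2 * r <= n then 'C(r.+1, n - 2 * r - d) * 'C((n - 2 * r).-1, d) else 0.

Lemma closed10S n r d : closed10 n.+1 r d =
  closed00 n r d + (if r is r'.+1 then closed01 n r' d else 0).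
Proof.
rewrite /closed10 /closed00 /closed01; case: r => [|r].
  rewrite !muln0 !subn0 addn0 /=.
  have [le_dn | lt_nd] := leqP d n.+1; last by rewrite !(bin_small lt_nd) !muln0.
  by rewrite (subSn le_dn) binS bin0n.
case: (leqP (2 * r.+1) n.+2) => [r_le | r_gt]; last by rewrite !ifF //; lia.
rewrite (_ : 2 * r <= n = true); last by lia.
case: (leqP (2 * r.+1) n.+1) => [r_le' | r_gt']; last first.
  have -> : n.+2 - 2 * r.+1 = 0 by lia.
  have -> : n.+1 - 2 * r.+1 = 0 by lia.
  have -> : n - 2 * r = 0 by lia.
  by rewrite !sub0n /= !bin0 add0n.
have -> : n.+2 - 2 * r.+1 = (n.+1 - 2 * r.+1).+1 by lia.
have -> : (n - 2 * r).-1 = n.+1 - 2 * r.+1 by lia.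
have -> : n - 2 * r = (n.+1 - 2 * r.+1).+1 by lia.
set M := n.+1 - 2 * r.+1.
have [le_dM | lt_Md] := leqP d M; last by rewrite !(bin_small lt_Md) !muln0.
by rewrite subSn // binS mulnDl addnC.
Qed.

Lemma closed00S n r d : closed00 n.+1 r d =
    (if d is d'.+1 then closed00 n r d' else 0)
  + (if r is r'.+1 then closed01 n r' d else 0).
Proof.
rewrite /closed00 /closed01; case: d => [|d]; case: r => [|r].
- by rewrite /= subn0 bin0n.
- rewrite /= add0n !subn0 !bin0 !muln1.
  have -> : n.+2 - 2 * r.+1 = n - 2 * r by lia.
  by rewrite (_ : (2 * r.+1 <= n.+2) = (2 * r <= n)) //; apply/idP/idP; lia.
- rewrite /= addn0 !muln0 !subn0.
  have [le_dn | lt_nd] := leqP d n.+1; last first.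
    by rewrite (bin_small lt_nd) (@bin_small n.+2 d.+1) ?muln0.
  rewrite subSS; case E: (n.+1 - d) => [|k]; last by rewrite !bin0n.
  have -> : d = n.+1 by lia.
  by rewrite !binn.
have [r_le | r_gt] := leqP (2 * r) n; last by rewrite !ifF //; lia.
rewrite (_ : 2 * r.+1 <= n.+2 = true); last by lia.
have -> : n.+2 - 2 * r.+1 - d.+1 = (n - 2 * r).-1 - d by lia.
have -> : n.+2 - 2 * r.+1 = n - 2 * r by lia.
have -> : n.+1 - 2 * r.+1 - d = (n - 2 * r).-1 - d by lia.
have -> : n.+1 - 2 * r.+1 = (n - 2 * r).-1 by lia.
have -> : n - 2 * r - d.+1 = (n - 2 * r).-1 - d by lia.
case E: (n - 2 * r) => [|K]; first by rewrite ifF /= ?bin0n ?muln0 //; lia.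
by rewrite ifT /=; [rewrite binS mulnDr addnC | lia].
Qed.

Lemma closed01S n r d : closed01 n.+1 r d = closed10 n r d.
Proof. by rewrite /closed01 /closed10 (_ : (n.+1 - 2 * r).-1 = n - 2 * r) //; lia. Qed.

Lemma nsparse_closed n :
  [/\ nsparse true false n =2 closed10 n, nsparse false false n =2 closed00 n
    & nsparse false true n =2 closed01 n].
Proof.
elim: n => [|n [IH10 IH00 IH01]]; split=> r d.
1-3: rewrite nsparse0 /closed10 /closed00 /closed01;
  by case: r => [|r]; [case: d => [|[|d]] | rewrite ?ifF //; lia].
- by rewrite nsparse10S closed10S IH00; case: r => [|r] //; rewrite IH01.
- by rewrite nsparse00S closed00S; case: d => [|d]; case: r => [|r]; rewrite ?IH00 ?IH01.
- by rewrite nsparse01S closed01S IH10.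
Qed.

Lemma card_ord_count m (S : {set 'I_m}) (p : pred nat) :
  (forall i : 'I_m, (i \in S) = p i) -> #|S| = count p (iota 0 m).
Proof.
move=> memS; rewrite -val_enum_ord count_map cardE /enum_mem size_filter count_filter.
by apply: eq_count => i /=; rewrite memS inE andbT.
Qed.

Definition set_of_bits n (s : bitseq) : {set 'I_n.+1} :=
  [set i : 'I_n.+1 | nth false (false :: s) i].

Definition bits_of_set n (A : {set 'I_n.+1}) : bitseq := mkseq (fun k => inord k.+1 \in A) n.

Lemma set_of_bits_ground n s : set_of_bits n s \subset ground n.
Proof. by apply/subsetP => -[[|k] ?]; rewrite !inE. Qed.

Lemma bits_of_setK n (A : {set 'I_n.+1}) : A \subset ground n -> set_of_bits n (bits_of_set A) = A.
Proof.
move=> /subsetP A_ground; apply/setP => -[[|k] lt_k] /=; rewrite inE /=.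
  by apply/esym/negbTE/negP => /A_ground; rewrite inE.
by rewrite nth_mkseq //; congr (_ \in A); apply: val_inj; rewrite /= inordK.
Qed.

Lemma set_of_bits_inj n s t :
  size s = n -> size t = n -> set_of_bits n s = set_of_bits n t -> s = t.
Proof.
move=> size_s size_t eq_st; apply: (@eq_from_nth _ false); first by rewrite size_s size_t.
move=> i lt_is; have /setP/(_ (inord i.+1)) := eq_st.
by rewrite !inE /= inordK //= ltnS -size_s.
Qed.

Lemma card_set_of_bits n s : size s = n -> #|set_of_bits n s| = count id s.
Proof.
move=> size_s; rewrite (@card_ord_count _ _ (nth false (false :: s))) => [|i].
  transitivity (count id (false :: s)) => //.
  by rewrite -{2}(mkseq_nth false (false :: s)) count_map /= size_s.
by rewrite inE.
Qed.

Lemma card_sets_bitseqs n (Q : pred {set 'I_n.+1}) (P : pred bitseq) :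
  (forall A, Q A -> A \subset ground n) ->
  (forall s, size s = n -> Q (set_of_bits n s) = P s) ->
  #|[set A | Q A]| = count P (bitseqs n).
Proof.
move=> Q_ground QP.
have uniq_sets : uniq (map (set_of_bits n) (filter P (bitseqs n))).
  rewrite map_inj_in_uniq ?filter_uniq ?uniq_bitseqs // => s t.
  by rewrite !mem_filter !mem_bitseqs => /andP [_ /eqP] + /andP [_ /eqP]; apply: set_of_bits_inj.
rewrite -size_filter -(size_map (set_of_bits n)) -(card_uniqP uniq_sets).
apply: eq_card => A; rewrite inE; apply/idP/mapP => [QA | [s]].
  have sizeA := size_mkseq (fun k => inord k.+1 \in A) n.
  exists (bits_of_set A); last by rewrite bits_of_setK ?Q_ground.
  by rewrite mem_filter mem_bitseqs sizeA eqxx andbT -QP // bits_of_setK ?Q_ground.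
by rewrite mem_filter mem_bitseqs => /andP [Ps /eqP size_s] ->; rewrite QP.
Qed.

Lemma inQ_set_of_bits n s : size s = n -> inQ (set_of_bits n s) = path nand false s.
Proof.
move=> size_s; rewrite /inQ set_of_bits_ground /=; apply/idP/(pathP false).
  move=> /forallP sparse [|k] lt_ks //=; apply/negP => /andP [sk sk1].
  have lt_k1 : k.+1 < n.+1 by lia.
  have lt_k2 : k.+2 < n.+1 by lia.
  move: sparse => /(_ (inord k.+1)) /implyP; rewrite inE inordK // => /(_ sk) /forallP.
  by move=> /(_ (inord k.+2)) /implyP; rewrite inE !inordK // eqxx => /(_ sk1).
move=> sparse; apply/forallP => i; apply/implyP; rewrite inE => si.
apply/forallP => j; apply/implyP; rewrite inE; apply: contraTN => /eqP <- /=.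
have [lt_is | le_si] := ltnP i (size s); last by rewrite nth_default.
by have := sparse i lt_is; rewrite /nand si.
Qed.

Lemma inQ_setU1 n (A : {set 'I_n.+1}) (b : 'I_n.+1) : inQ A -> 0 < b ->
  inQ (b |: A) = [forall i in A, ((i : nat).+1 != b) && ((b : nat).+1 != i)].
Proof.
move=> /andP [A_ground /forallP sparseA] b_gt0; apply/idP/forallP => [|nbr].
  move=> /andP [_ /forallP sparse] i; apply/implyP => iA; apply/andP; split.
    by have /implyP/(_ (setU1r b iA))/forallP/(_ b)/implyP := sparse i; apply; rewrite setU11.
  by have /implyP/(_ (setU11 b A))/forallP/(_ i)/implyP := sparse b; apply; rewrite setU1r.
rewrite /inQ subUset sub1set inE b_gt0 A_ground /=.
apply/forallP => i; apply/implyP; rewrite in_setU1 => /predU1P [-> | iA];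
  apply/forallP => j; apply/implyP; rewrite in_setU1 => /predU1P [-> | jA].
- by rewrite gtn_eqF.
- by have /implyP/(_ jA)/andP[] := nbr j.
- by have /implyP/(_ iA)/andP[] := nbr i.
- by have /implyP/(_ iA)/forallP/(_ j)/implyP := sparseA i; apply.
Qed.

Lemma set_of_bits_isolated n s (b : 'I_n.+1) : size s = n -> 0 < b ->
  [forall i in set_of_bits n s, ((i : nat).+1 != b) && ((b : nat).+1 != i)]
  = ~~ nth false (false :: s) b.-1 && ~~ nth false (false :: s) b.+1.
Proof.
move=> size_s b_gt0; apply/forallP/andP => [nbr | [nb_pred nb_succ] i]; last first.
  apply/implyP; rewrite inE => si; apply/andP; split; apply/eqP => eq_ib.
    by move: nb_pred; rewrite -eq_ib /= si.
  by move: nb_succ; rewrite eq_ib si.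
split; apply/negP => sb.
  have lt_b1 : b.-1 < n.+1 by have := ltn_ord b; lia.
  have := nbr (inord b.-1); rewrite inE inordK // sb /= prednK // eqxx //.
have lt_b1 : b.+1 < n.+1.
  by have [//|le_nb] := ltnP; move: sb; rewrite nth_default //= size_s.
by have := nbr (inord b.+1); rewrite inE inordK // sb /= eqxx andbF.
Qed.

Lemma nfree_count a b s : nfree a b s =
  count (fun i => ~~ [|| nth false (a :: b :: s) i, nth false (a :: b :: s) i.+1
                       | nth false (a :: b :: s) i.+2]) (iota 0 (size s).+1).
Proof.
elim: s a b => [|x s IH] a b; first by rewrite /= orbF addn0.
have -> : iota 0 (size (x :: s)).+1 = 0 :: map succn (iota 0 (size s).+1).
  by rewrite -(iotaDl 1 0).
by rewrite [nfree _ _ _]/= IH [count _ (0 :: _)]/= count_map.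
Qed.

Lemma outdeg_set_of_bits n s : size s = n -> path nand false s ->
  outdeg (set_of_bits n s) = nfree true false s.
Proof.
move=> size_s sparse; set u := false :: s.
pose free b := [&& 0 < b, ~~ nth false u b, ~~ nth false u b.-1 & ~~ nth false u b.+1].
rewrite /outdeg (@card_ord_count _ _ free) => [|b].
  rewrite nfree_count size_s; apply: eq_in_count => -[|b] _ //=.
  by rewrite /free /u /=; case: (nth false (false :: s) b); case: (nth false s b);
    case: (nth false s b.+1).
rewrite !inE /free; have [b_gt0 | _] := ltnP 0 b; last by rewrite andbF.
by rewrite andbT inQ_setU1 ?set_of_bits_isolated // inQ_set_of_bits.
Qed.

Lemma qnrd_closed n r d : qnrd n r (Posz d) = closed10 n r d.
Proof.
have [<- _ _] := nsparse_closed n; rewrite /qnrd /nsparse.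
apply: card_sets_bitseqs => [A /and3P [/andP [] //] | s size_s].
rewrite inQ_set_of_bits // card_set_of_bits // eqz_nat.
by case sparse: (path nand false s) => //=; rewrite outdeg_set_of_bits.
Qed.

Lemma qnrd_Negz n r k : qnrd n r (Negz k) = 0.
Proof. by apply/eqP; rewrite cards_eq0; apply/eqP/setP => A; rewrite !inE /= !andbF. Qed.

Definition qbin N r e := 'C(r.+1, N.+1 - e) * 'C(N, e).

Lemma closed10_qbin N r e : closed10 (N + 2 * r) r e = qbin N r e.
Proof. by rewrite /closed10 ifT ?addnK /qbin; [congr ('C(_, _) * _); lia | lia]. Qed.

Lemma qbin_succ N r e : e <= N ->
  qbin N r e.+1 * (e.+1 * (r.+1 - (N - e))) = qbin N r e * ((N - e).+1 * (N - e)).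
Proof.
move=> le_eN; rewrite /qbin subSS (subSn le_eN).
have := mul_bin_left r.+1 (N - e); have := mul_bin_left N e.
set a := N - e; set x := 'C(r.+1, a); set y := 'C(r.+1, a.+1).
set z := 'C(N, e.+1); set w := 'C(N, e).
move: (r.+1 - a) => c /(congr1 Posz) eq_z /(congr1 Posz) eq_y.
apply/eqP; rewrite -eqz_nat; apply/eqP; move: eq_z eq_y; rewrite !PoszM => eq_z eq_y.
transitivity ((e.+1%:Z * z%:Z) * (c%:Z * x%:Z))%R; first by ring.
by rewrite eq_z -eq_y; ring.
Qed.

Lemma leq_of_mul_eq a b p q : a * p = b * q -> b <= a -> 0 < a -> p <= q.
Proof. by move=> eq_ab le_ba a_gt0; rewrite -(leq_pmul2l a_gt0) eq_ab leq_mul2r le_ba orbT. Qed.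

Local Open Scope ring_scope.

Definition xq (n r : nat) : int := (n%:Z - 2 * r%:Z) ^+ 2 + 2 * n%:Z - 5 * r%:Z - 1.
Definition yq (n r : nat) : int := n%:Z - r%:Z + 3.

(* For [a = N - e] the right-hand side is numerator minus denominator of the ratio
   [qbin N r e.+1 / qbin N r e] given by [qbin_succ]. *)
Lemma xq_sub_yq a e r : xq (a + e + 2 * r) r - e%:Z * yq (a + e + 2 * r) r
  = (a.+1 * a)%:Z - e.+1%:Z * (r.+1%:Z - a%:Z).
Proof. by rewrite /xq /yq !PoszD !PoszM !intS; ring. Qed.

Lemma qbin_succ_le N r e :
  (e <= N)%N -> (0 < qbin N r e)%N -> (qbin N r e.+1 <= qbin N r e)%N ->
  xq (N + 2 * r) r <= e%:Z * yq (N + 2 * r) r.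
Proof.
move=> le_eN qe_gt0 le_q; have [a eq_N] : exists a, N = (a + e)%N.
  by exists (N - e)%N; rewrite subnK.
subst N.
have := leq_of_mul_eq (esym (qbin_succ r le_eN)) le_q qe_gt0; rewrite addnK.
have : (a < r.+1)%N by move: qe_gt0; rewrite muln_gt0 bin_gt0 -addSn addnK => /andP[].
rewrite -subr_le0 xq_sub_yq; nia.
Qed.

Lemma qbin_le_succ N r e :
  (e <= N)%N -> (0 < qbin N r e.+1)%N -> (qbin N r e <= qbin N r e.+1)%N ->
  e%:Z * yq (N + 2 * r) r <= xq (N + 2 * r) r.
Proof.
move=> le_eN qe_gt0 le_q; have [a eq_N] : exists a, N = (a + e)%N.
  by exists (N - e)%N; rewrite subnK.
subst N.
have := leq_of_mul_eq (qbin_succ r le_eN) le_q qe_gt0; rewrite addnK.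
have : (a <= r.+1)%N by move: qe_gt0; rewrite muln_gt0 bin_gt0 subSS addnK => /andP[].
rewrite -subr_ge0 xq_sub_yq; nia.
Qed.

Lemma closed10_argmax_bounds n r d : (2 * r <= n.+1)%N ->
  (forall e, closed10 n r e <= closed10 n r d)%N -> (0 < closed10 n r d)%N ->
  (d%:Z - 1) * yq n r <= xq n r <= d%:Z * yq n r.
Proof.
move=> le_2r dmax d_pos; have [lt_n2r | le_2rn] := ltnP n (2 * r).
  have d0 : d = 0%N.
    move: d_pos; rewrite /closed10 le_2r (_ : n - 2 * r = 0)%N; last by lia.
    by rewrite muln_gt0 !bin_gt0 leqn0 => /andP[_ /eqP].
  have -> : xq n r = - yq n r.
    by rewrite /xq /yq (_ : n%:Z - 2 * r%:Z = -1) ?sqrrN1; lia.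
  by rewrite d0 /yq; lia.
have [N eq_n] : exists N, n = (N + 2 * r)%N by exists (n - 2 * r)%N; rewrite subnK.
subst n; rewrite closed10_qbin in d_pos.
have {}dmax e : (qbin N r e <= qbin N r d)%N by rewrite -!closed10_qbin.
have le_dN : (d <= N)%N by move: d_pos; rewrite muln_gt0 !bin_gt0 => /andP[_ ->].
apply/andP; split; last exact: qbin_succ_le le_dN d_pos (dmax d.+1).
case: d => [|e] in le_dN dmax d_pos *.
  by have := xq_sub_yq N 0 r; rewrite addn0 /yq; nia.
rewrite (_ : e.+1%:Z - 1 = e%:Z); last by lia.
exact: qbin_le_succ (ltnW le_dN) d_pos (dmax e).
Qed.

Lemma ceil_div_cases (x y d : int) : 0 < y -> (d - 1) * y <= x <= d * y ->
  d = Num.ceil (x%:~R / y%:~R : rat) \/ (d%:~R : rat) = x%:~R / y%:~R + 1.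
Proof.
move=> y_gt0 /andP [lo hi]; have y_neq0 : (y%:~R : rat) != 0 by rewrite intr_eq0 gt_eqF.
have [x_eq | x_neq] := eqVneq x ((d - 1) * y).
  by right; rewrite x_eq intrM mulfK // rmorphB /= subrK.
left; apply/esym/ceil_def.
rewrite ltr_pdivlMr ?ltr0z // ler_pdivrMr ?ltr0z // -!intrM ltr_int ler_int hi andbT.
by rewrite lt_neqAle eq_sym x_neq lo.
Qed.

Unset Implicit Arguments.

Theorem mainTheorem5 (n r : nat) (dstar : int) :
  (0 < n)%N -> (r <= uphalf n)%N ->
  (forall d : int, (qnrd n r d <= qnrd n r dstar)%N) ->
  let X : int := (n%:Z - 2 * r%:Z) ^+ 2 + 2 * n%:Z - 5 * r%:Z - 1 in
  let Y : int := n%:Z - r%:Z + 3 in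
  dstar = Num.ceil ((X%:~R : rat) / Y%:~R)
  \/ (dstar%:~R : rat) = X%:~R / Y%:~R + 1.
Proof.
move=> _ le_r_half dstar_max X Y.
have le_2r : (2 * r <= n.+1)%N.
  by move: le_r_half; rewrite uphalf_half -(odd_double_half n) -muln2; lia.
have pos : (0 < closed10 n r (n - 2 * r))%N.
  by rewrite /closed10 le_2r muln_gt0 !bin_gt0; lia.
have [d eq_dstar] : exists d : nat, dstar = d.
  case: dstar dstar_max => [d | k] dmax; first by exists d.
  by have := dmax (n - 2 * r)%N; rewrite qnrd_Negz qnrd_closed leqn0; move: pos; lia.
subst dstar; have dmax e : (closed10 n r e <= closed10 n r d)%N by rewrite -!qnrd_closed.
apply: ceil_div_cases; first by rewrite /Y; lia.
exact: closed10_argmax_bounds le_2r dmax (leq_trans pos (dmax _)).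
Qed.
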